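(* There is an absolute constant $c>0$ such that the following holds. Let $m,n\ge1$ be integers, $\gamma,\delta>0$, and let $x\in\mathbb{R}^n$ satisfy $\|x\|_\infty\le\delta$ and $\|x\|_2^2\ge\|x\|_\infty^2+\gamma^2$. Let $T=\pi m/\delta$. Then $$\int_0^T\prod_{i=1}^n F\!\left(\frac{x_i t}{2\pi m}\right)dt\le\frac{c}{\gamma},$$ where $F(y)=\left|\frac{\sin((2m+1)\pi y)}{(2m+1)\sin(\pi y)}\right|$ (with $F(y)=1$ for $y\in\mathbb{Z}$). *)

From Stdlib Require Import Reals.
From Coquelicot Require Import Coquelicot.
Open Scope R_scope.

(* Vectors x in R^n are functions nat -> R, only indices 0..n-1 matter. *)

Fixpoint sumR (n : nat) (f : nat -> R) : R :=
  match n with O => 0 | S k => sumR k f + f k end.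

Fixpoint prodR (n : nat) (f : nat -> R) : R :=
  match n with O => 1 | S k => prodR k f * f k end.

Fixpoint linf (n : nat) (x : nat -> R) : R :=
  match n with O => 0 | S k => Rmax (linf k x) (Rabs (x k)) end.

Definition l2sq (n : nat) (x : nat -> R) : R := sumR n (fun i => x i ^ 2).

(* F(y) = |sin((2m+1) pi y) / ((2m+1) sin(pi y))|, with F(y) = 1 for integer y
   (y is an integer iff its fractional part is 0). *)
Definition Fker (m : nat) (y : R) : R :=
  if Req_EM_T (frac_part y) 0 then 1
  else Rabs (sin ((2 * INR m + 1) * PI * y) / ((2 * INR m + 1) * sin (PI * y))).

From Stdlib Require Import Reals Lra Psatz ZArith Lia FunctionalExtensionality.
From Coquelicot Require Import Coquelicot.
Open Scope R_scope.

(* 1. Trigonometric inequality (sin_multiple_bound): for N >= 3 and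
      0 < th <= pi/2, sin(N th)^2 (1 + (N th/pi)^2) <= (N sin th)^2, proved
      from Stdlib's Taylor bounds for sin.
   2. F is the normalized Dirichlet kernel |1 + 2 sum_k cos(2 k pi y)|/(2m+1)
      (Fker_dirichlet), hence continuous, and by 1. it satisfies the decay
      estimate F(y)^2 (1 + (2m+1)^2 y^2) <= 1 for |y| <= 1/2 (dirichlet_decay).
   3. On [0, T] all arguments x_i t/(2 pi m) lie in [-1/2, 1/2]. Multiplying
      the estimates of 2. and bounding prod (1 + k x_i^2) below by its
      second-order term k^2 (|x|_2^4 - |x|_oo^2 |x|_2^2)/2 >= k^2 gamma^4/2
      shows that the integrand is at most 2 pi^2/(gamma t)^2
      (kernel_product_decay); it is also at most 1.
   4. A function bounded by 1 and by A/t^2 integrates to at most a + A/a over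
      [0, T] (RInt_plateau_tail_bound); a = 2 pi/gamma gives 3 pi/gamma. *)

Lemma sin_ub_eq t : sin_ub t = t - t^3/6 + t^5/120 - t^7/5040 + t^9/362880.
Proof.
  unfold sin_ub, sin_approx; simpl sum_f_R0; unfold sin_term; cbn [Nat.mul Nat.add].
  rewrite !fact_simpl, !mult_INR; simpl INR; field.
Qed.

Lemma sin_lb_eq t : sin_lb t = t - t^3/6 + t^5/120 - t^7/5040.
Proof.
  unfold sin_lb, sin_approx; simpl sum_f_R0; unfold sin_term; cbn [Nat.mul Nat.add].
  rewrite !fact_simpl, !mult_INR; simpl INR; field.
Qed.

(* Crude numerical bounds 3 <= pi <= 3.2; the upper one holds because sin is
   nonnegative on [0, pi] while its degree-9 Taylor bound is negative at 3.2. *)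
Lemma PI_le_3_2 : PI <= 3.2.
Proof.
  destruct (Rle_or_lt PI 3.2) as [h | h]; [exact h |].
  pose proof (SIN 3.2 ltac:(lra) ltac:(lra)) as Hub.
  pose proof (sin_ge_0 3.2 ltac:(lra) ltac:(lra)).
  rewrite sin_ub_eq in Hub; lra.
Qed.

Lemma PI_ge_3 : 3 <= PI.
Proof. pose proof PI2_3_2; lra. Qed.

Lemma sin_ge_cubic t : 0 <= t <= 2 -> t - t^3/6 <= sin t.
Proof.
  intros Ht; pose proof PI2_3_2.
  pose proof (SIN t ltac:(lra) ltac:(lra)) as [Hlb _]; rewrite sin_lb_eq in Hlb.
  assert (0 <= t^5) by (apply pow_le; lra).
  assert (t^7 = t^5 * t^2) by ring.
  assert (t^2 <= 4) by nra.
  nra.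
Qed.

Lemma sin_le_quintic t : 0 <= t <= 3 -> sin t <= t - t^3/6 + t^5/120.
Proof.
  intros Ht; pose proof PI2_3_2.
  pose proof (SIN t ltac:(lra) ltac:(lra)) as [_ Hub]; rewrite sin_ub_eq in Hub.
  assert (0 <= t^7) by (apply pow_le; lra).
  assert (t^9 = t^7 * t^2) by ring.
  assert (t^2 <= 9) by nra.
  nra.
Qed.

(* Polynomial inequality behind the small-argument case below, in v = u^2:
   (1 - v/6 + v^2/120)^2 (1 + v/9) <= (1 - v/54)^2 on [0, 9]. *)
Lemma quintic_factor_bound v : 0 <= v <= 9 ->
  (1 - v/6 + v^2/120)^2 * (1 + v/9) <= (1 - v/54)^2.
Proof.
  intros Hv.
  assert (Hdiff : (1 - v/6 + v^2/120)^2 * (1 + v/9) - (1 - v/54)^2 =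
    v * (-5/27 + (1/135 - 1/2916) * v + 7/3240 * v^2 - 31/129600 * v^3
         + 1/129600 * v^4)) by field.
  assert (0 <= v * (9 - v)) by nra.
  assert (0 <= v^2 * (9 - v)) by nra.
  assert (0 <= v^3 * (9 - v)) by nra.
  nra.
Qed.

(* The trigonometric heart of the kernel estimate:
   sin(N th)^2 (1 + (N th)^2/9) <= (N sin th)^2  for N >= 3 and 0 < th <= pi/2.
   For N th >= 3 one uses |sin| <= 1 and sin th >= th (1 - th^2/6) >= 0.57 th;
   for N th < 3 both sides are compared through their Taylor bounds. *)
Lemma sin_multiple_large (N th : R) : 3 <= N -> 0 < th <= PI/2 -> 3 <= N * th ->
  sin (N * th)^2 * (1 + (N * th)^2/9) <= (N * sin th)^2.
Proof.
  intros HN Hth Hu; pose proof PI_le_3_2.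
  assert (Hsin1 : sin (N * th)^2 <= 1)
    by (pose proof (sin2 (N * th)); pose proof (Rle_0_sqr (cos (N * th)));
        unfold Rsqr in *; nra).
  pose proof (sin_ge_cubic th ltac:(lra)).
  assert (th^2 <= 2.56) by nra.
  assert (N * sin th >= 0.57 * (N * th)) by nra.
  assert ((N * sin th)^2 >= 0.3249 * (N * th)^2) by nra.
  assert (0 <= (N * th)^2/9) by nra.
  assert (sin (N * th)^2 * (1 + (N * th)^2/9) <= 1 + (N * th)^2/9)
    by (apply (Rmult_le_compat_r (1 + (N * th)^2/9)) in Hsin1; lra).
  nra.
Qed.

Lemma sin_multiple_small (N th : R) : 3 <= N -> 0 < th -> N * th < 3 ->
  sin (N * th)^2 * (1 + (N * th)^2/9) <= (N * sin th)^2.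
Proof.
  intros HN Hth Hu; set (u := N * th) in *.
  assert (Hu0 : 0 < u) by (unfold u; nra).
  assert (Hth1 : th <= 1) by (unfold u in Hu; nra).
  pose proof (sin_le_quintic u ltac:(lra)) as Hsu.
  pose proof (sin_ge_0 u ltac:(lra) ltac:(pose proof PI_ge_3; lra)).
  (* N sin th >= u - u^3/54, using sin th >= th - th^3/6 and N^2 >= 9 *)
  assert (HNs : u - u^3/54 <= N * sin th).
  { pose proof (sin_ge_cubic th ltac:(lra)).
    assert (0 <= th^3) by (apply pow_le; lra).
    assert (0 <= N * th^3 * (N^2 - 9)) by (apply Rmult_le_pos; nra).
    unfold u; nra. }
  pose proof (quintic_factor_bound (u^2) ltac:(split; nra)) as Hq.
  assert (Hquin : (u - u^3/6 + u^5/120)^2 * (1 + u^2/9) <= (u - u^3/54)^2).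
  { replace ((u - u^3/6 + u^5/120)^2 * (1 + u^2/9))
      with (u^2 * ((1 - u^2/6 + (u^2)^2/120)^2 * (1 + u^2/9))) by field.
    replace ((u - u^3/54)^2) with (u^2 * (1 - u^2/54)^2) by field.
    apply Rmult_le_compat_l; nra. }
  assert (sin u^2 <= (u - u^3/6 + u^5/120)^2) by nra.
  assert (0 <= u - u^3/54) by nra.
  assert (sin u^2 * (1 + u^2/9) <= (u - u^3/6 + u^5/120)^2 * (1 + u^2/9))
    by (apply Rmult_le_compat_r; nra).
  nra.
Qed.

Lemma sin_multiple_bound (N th : R) : 3 <= N -> 0 < th <= PI/2 ->
  sin (N * th)^2 * (1 + (N * th)^2/PI^2) <= (N * sin th)^2.
Proof.
  intros HN Hth; pose proof PI_ge_3.
  assert (Hpi : (N * th)^2/PI^2 <= (N * th)^2/9).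
  { apply Rmult_le_compat_l; [nra |]. apply Rinv_le_contravar; nra. }
  assert (Hle : sin (N * th)^2 * (1 + (N * th)^2/PI^2) <= sin (N * th)^2 * (1 + (N * th)^2/9))
    by (apply Rmult_le_compat_l; nra).
  destruct (Rle_or_lt 3 (N * th)).
  - pose proof (sin_multiple_large N th HN Hth ltac:(lra)); lra.
  - pose proof (sin_multiple_small N th HN ltac:(lra) ltac:(lra)); lra.
Qed.

Lemma sumR_ext n f g : (forall i, (i < n)%nat -> f i = g i) -> sumR n f = sumR n g.
Proof.
  induction n as [| n IH]; intros H; simpl; [reflexivity |].
  rewrite IH by (intros; apply H; lia); rewrite H by lia; reflexivity.
Qed.

Lemma sumR_const n c : sumR n (fun _ => c) = INR n * c.
Proof. induction n as [| n IH]; simpl sumR; [simpl; ring | rewrite IH, S_INR; ring]. Qed.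

Lemma sumR_scal n k f : sumR n (fun i => k * f i) = k * sumR n f.
Proof. induction n as [| n IH]; simpl; [ring | rewrite IH; ring]. Qed.

Lemma sumR_nonneg n f : (forall i, (i < n)%nat -> 0 <= f i) -> 0 <= sumR n f.
Proof.
  induction n as [| n IH]; intros H; cbn [sumR prodR]; [lra |].
  pose proof (IH ltac:(intros; apply H; lia)); pose proof (H n ltac:(lia)); lra.
Qed.

Lemma sumR_le n f g : (forall i, (i < n)%nat -> f i <= g i) -> sumR n f <= sumR n g.
Proof.
  induction n as [| n IH]; intros H; cbn [sumR prodR]; [lra |].
  pose proof (IH ltac:(intros; apply H; lia)); pose proof (H n ltac:(lia)); lra.
Qed.

Lemma div_nonneg a b : 0 <= a -> 0 < b -> 0 <= a / b.
Proof. intros Ha Hb; apply Rmult_le_pos; [exact Ha | apply Rlt_le, Rinv_0_lt_compat, Hb]. Qed.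

Lemma prodR_nonneg n f : (forall i, (i < n)%nat -> 0 <= f i) -> 0 <= prodR n f.
Proof.
  induction n as [| n IH]; intros H; cbn [sumR prodR]; [lra |].
  apply Rmult_le_pos; [apply IH; intros; apply H | apply H]; lia.
Qed.

Lemma prodR_le_1 n f : (forall i, (i < n)%nat -> 0 <= f i <= 1) -> prodR n f <= 1.
Proof.
  induction n as [| n IH]; intros H; cbn [sumR prodR]; [lra |].
  pose proof (IH ltac:(intros; apply H; lia)).
  pose proof (prodR_nonneg n f ltac:(intros; apply H; lia)).
  pose proof (H n ltac:(lia)); nra.
Qed.

Lemma prodR_sq n f : prodR n f ^ 2 = prodR n (fun i => f i ^ 2).
Proof. induction n as [| n IH]; cbn [prodR]; [ring | rewrite <- IH; ring]. Qed.

Lemma prodR_mul_le_1 n a b :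
  (forall i, (i < n)%nat -> 0 <= a i /\ 0 <= b i /\ b i * (1 + a i) <= 1) ->
  prodR n b * prodR n (fun i => 1 + a i) <= 1.
Proof.
  induction n as [| n IH]; intros H; cbn [sumR prodR]; [lra |].
  pose proof (IH ltac:(intros; apply H; lia)).
  pose proof (prodR_nonneg n b ltac:(intros; apply H; lia)).
  pose proof (prodR_nonneg n (fun i => 1 + a i)
                ltac:(intros i Hi; pose proof (H i ltac:(lia)); lra)).
  destruct (H n ltac:(lia)) as [Ha [Hb Hab]].
  replace (prodR n b * b n * (prodR n (fun i => 1 + a i) * (1 + a n)))
    with ((prodR n b * prodR n (fun i => 1 + a i)) * (b n * (1 + a n))) by ring.
  assert (0 <= b n * (1 + a n)) by nra.
  nra.
Qed.

Lemma sumR_sq_le n a : (forall i, (i < n)%nat -> 0 <= a i) ->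
  sumR n (fun i => a i ^ 2) <= sumR n a ^ 2.
Proof.
  induction n as [| n IH]; intros H; cbn [sumR prodR]; [lra |].
  pose proof (IH ltac:(intros; apply H; lia)).
  pose proof (H n ltac:(lia)).
  pose proof (sumR_nonneg n a ltac:(intros; apply H; lia)); nra.
Qed.

(* Expanding prod (1 + a_i) up to the second elementary symmetric function:
   prod (1 + a_i) >= 1 + e_1(a) + e_2(a), with 2 e_2 = (sum a)^2 - sum a^2. *)
Lemma prodR_one_plus_ge n a : (forall i, (i < n)%nat -> 0 <= a i) ->
  1 + sumR n a + (sumR n a ^ 2 - sumR n (fun i => a i ^ 2)) / 2
  <= prodR n (fun i => 1 + a i).
Proof.
  induction n as [| n IH]; intros H; cbn [sumR prodR]; [lra |].
  pose proof (IH ltac:(intros; apply H; lia)) as Hind.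
  pose proof (sumR_sq_le n a ltac:(intros; apply H; lia)) as Hsq.
  pose proof (H n ltac:(lia)).
  pose proof (sumR_nonneg n a ltac:(intros; apply H; lia)).
  pose proof (Rmult_le_compat_r (a n) _ _ ltac:(lra) Hind).
  pose proof (Rmult_le_compat_r (a n) _ _ ltac:(lra) Hsq).
  nra.
Qed.

Lemma linf_nonneg n x : 0 <= linf n x.
Proof. induction n as [| n IH]; simpl; [lra | apply (Rle_trans _ _ _ IH), Rmax_l]. Qed.

Lemma linf_ge n x i : (i < n)%nat -> Rabs (x i) <= linf n x.
Proof.
  induction n as [| n IH]; intros H; [lia |]; simpl.
  destruct (Nat.eq_dec i n) as [-> | Hne]; [apply Rmax_r |].
  apply (Rle_trans _ _ _ (IH ltac:(lia))), Rmax_l.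
Qed.

Lemma sumR_continuous n (f : nat -> R -> R) : (forall k, continuity (f k)) ->
  continuity (fun y => sumR n (fun k => f k y)).
Proof.
  intros H; induction n as [| n IH]; simpl.
  - apply continuity_const; intros u v; reflexivity.
  - apply (continuity_plus (fun y => sumR n (fun k => f k y)) (f n)); auto.
Qed.

Lemma prodR_continuous n (f : nat -> R -> R) : (forall k, (k < n)%nat -> continuity (f k)) ->
  continuity (fun y => prodR n (fun k => f k y)).
Proof.
  intros H; induction n as [| n IH]; simpl.
  - apply continuity_const; intros u v; reflexivity.
  - apply (continuity_mult (fun y => prodR n (fun k => f k y)) (f n));
      [apply IH; intros; apply H | apply H]; lia.
Qed.

Lemma linear_continuous c : continuity (fun y => c * y).
Proof. apply (continuity_scal id c), derivable_continuous, derivable_id. Qed.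

(* The Dirichlet sum D_m(th) = 1 + 2 sum_{k=1}^m cos(2 k th) and the normalized
   kernel |D_m(pi y)| / (2m+1), which is a continuous expression of [Fker]. *)
Definition dirichlet_sum (m : nat) (th : R) : R :=
  1 + 2 * sumR m (fun k => cos (2 * INR (S k) * th)).

Definition dirichlet (m : nat) (y : R) : R :=
  Rabs (dirichlet_sum m (PI * y)) / (2 * INR m + 1).

(* Telescoping via 2 sin th cos(2k th) = sin((2k+1) th) - sin((2k-1) th). *)
Lemma dirichlet_sum_sin m th : sin th * dirichlet_sum m th = sin ((2 * INR m + 1) * th).
Proof.
  induction m as [| m IH]; unfold dirichlet_sum in *.
  - simpl; replace ((2 * 0 + 1) * th) with th by ring; ring.
  - cbn [sumR].
    replace (sin th * (1 + 2 * (sumR m (fun k => cos (2 * INR (S k) * th))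
                                + cos (2 * INR (S m) * th))))
      with (sin th * (1 + 2 * sumR m (fun k => cos (2 * INR (S k) * th)))
            + 2 * sin th * cos (2 * INR (S m) * th)) by ring.
    rewrite IH.
    replace ((2 * INR (S m) + 1) * th) with (2 * INR (S m) * th + th) by ring.
    replace ((2 * INR m + 1) * th) with (2 * INR (S m) * th - th) by (rewrite S_INR; ring).
    rewrite sin_plus, sin_minus; ring.
Qed.

Lemma dirichlet_sum_abs m th : dirichlet_sum m th = dirichlet_sum m (Rabs th).
Proof.
  unfold dirichlet_sum; do 2 f_equal; apply sumR_ext; intros i _.
  destruct (Rle_or_lt 0 th).
  - rewrite Rabs_pos_eq; auto.
  - rewrite Rabs_left, <- cos_neg by auto; f_equal; ring.
Qed.

Lemma cos_2PI_IZR j : cos (2 * PI * IZR j) = 1.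
Proof.
  destruct (Z_le_gt_dec 0 j) as [h | h].
  - rewrite <- (Z2Nat.id j h), <- INR_IZR_INZ.
    replace (2 * PI * INR (Z.to_nat j)) with (0 + 2 * INR (Z.to_nat j) * PI) by ring.
    rewrite cos_period; apply cos_0.
  - replace (2 * PI * IZR j) with (- (0 + 2 * INR (Z.to_nat (- j)) * PI)).
    + rewrite cos_neg, cos_period; apply cos_0.
    + rewrite INR_IZR_INZ, Z2Nat.id, opp_IZR by lia; ring.
Qed.

Lemma frac_part_IZR k : frac_part (IZR k) = 0.
Proof. unfold frac_part; rewrite <- (Int_part_spec (IZR k) k); [ring | lra]. Qed.

(* [Fker] is the normalized Dirichlet kernel: at integers both equal 1, and
   elsewhere sin((2m+1) pi y) = sin(pi y) D_m(pi y). *)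
Lemma Fker_dirichlet m y : Fker m y = dirichlet m y.
Proof.
  assert (HN : 0 < 2 * INR m + 1) by (pose proof (pos_INR m); lra).
  unfold Fker, dirichlet; destruct (Req_EM_T (frac_part y) 0) as [Hint | Hint].
  - unfold frac_part in Hint.
    replace y with (IZR (Int_part y)) by lra; set (z := Int_part y).
    unfold dirichlet_sum; rewrite (sumR_ext m _ (fun _ => 1)).
    + rewrite sumR_const, Rabs_pos_eq by (pose proof (pos_INR m); lra); field; lra.
    + intros i _; rewrite <- (cos_2PI_IZR (Z.of_nat (S i) * z)).
      f_equal; rewrite mult_IZR, <- INR_IZR_INZ; ring.
  - assert (Hs : sin (PI * y) <> 0).
    { intros Hs; destruct (sin_eq_0_0 _ Hs) as [k Hk]; apply Hint.
      replace y with (IZR k) by (pose proof PI_RGT_0; nra); apply frac_part_IZR. }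
    replace ((2 * INR m + 1) * PI * y) with ((2 * INR m + 1) * (PI * y)) by ring.
    rewrite <- dirichlet_sum_sin.
    replace (sin (PI * y) * dirichlet_sum m (PI * y) / ((2 * INR m + 1) * sin (PI * y)))
      with (dirichlet_sum m (PI * y) / (2 * INR m + 1)) by (field; lra).
    unfold Rdiv; rewrite Rabs_mult, Rabs_inv, (Rabs_pos_eq (2 * INR m + 1)) by lra.
    reflexivity.
Qed.

Lemma dirichlet_nonneg m y : 0 <= dirichlet m y.
Proof.
  unfold dirichlet; apply div_nonneg; [apply Rabs_pos | pose proof (pos_INR m); lra].
Qed.

Lemma dirichlet_continuous m : continuity (dirichlet m).
Proof.
  assert (Hcos : forall k, continuity (fun y => cos (2 * INR (S k) * (PI * y)))).
  { intros k y.
    apply (continuity_pt_ext (comp cos (fun y => 2 * INR (S k) * PI * y)));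
      [intros z; unfold comp; f_equal; ring |].
    apply continuity_comp; [apply linear_continuous | apply continuity_cos]. }
  intros y; unfold dirichlet, dirichlet_sum, Rdiv.
  apply (continuity_pt_mult _ (fun _ => / (2 * INR m + 1)));
    [| apply continuity_pt_const; intros u v; reflexivity].
  apply (continuity_pt_comp _ Rabs); [| apply Rcontinuity_abs].
  apply continuity_pt_plus; [apply continuity_pt_const; intros u v; reflexivity |].
  apply continuity_pt_scal, sumR_continuous, Hcos.
Qed.

Lemma dirichlet_decay m y : (1 <= m)%nat -> Rabs y <= 1/2 ->
  dirichlet m y ^ 2 * (1 + (2 * INR m + 1)^2 * y^2) <= 1.
Proof.
  intros Hm Hy; pose proof (le_INR 1 m Hm); simpl INR in *.
  set (N := 2 * INR m + 1); assert (HN : 3 <= N) by (unfold N; lra).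
  pose proof PI_RGT_0.
  destruct (Req_dec y 0) as [-> | Hy0].
  - rewrite <- Fker_dirichlet; unfold Fker; rewrite frac_part_IZR.
    destruct (Req_EM_T 0 0); [lra | contradiction].
  - set (th := PI * Rabs y).
    assert (Hth : 0 < th <= PI/2).
    { pose proof (Rabs_pos_lt y Hy0); unfold th; split; nra. }
    assert (Hs : 0 < sin th) by (apply sin_gt_0; lra).
    assert (HD : dirichlet_sum m (PI * y) = sin (N * th) / sin th).
    { rewrite dirichlet_sum_abs, Rabs_mult, (Rabs_pos_eq PI) by lra; fold th.
      pose proof (dirichlet_sum_sin m th) as Hds; fold N in Hds.
      rewrite <- Hds; field; lra. }
    pose proof (sin_multiple_bound N th HN Hth) as Hbound.
    replace ((N * th)^2/PI^2) with (N^2 * y^2) in Hbound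
      by (unfold th; rewrite <- (pow2_abs y); field; lra).
    unfold dirichlet; fold N; rewrite HD.
    replace ((Rabs (sin (N * th) / sin th) / N) ^ 2)
      with (sin (N * th)^2 / (N * sin th)^2)
      by (rewrite <- pow2_abs; unfold Rdiv;
          rewrite Rabs_mult, Rabs_inv, (Rabs_pos_eq (sin th)) by lra; field; lra).
    assert (0 < (N * sin th)^2) by (apply pow_lt; nra).
    apply (Rmult_le_reg_r ((N * sin th)^2)); [assumption |].
    replace (sin (N * th)^2 / (N * sin th)^2 * (1 + N^2 * y^2) * (N * sin th)^2)
      with (sin (N * th)^2 * (1 + N^2 * y^2)) by (field; lra).
    lra.
Qed.

Lemma dirichlet_le_1 m y : (1 <= m)%nat -> Rabs y <= 1/2 -> dirichlet m y <= 1.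
Proof.
  intros Hm Hy; pose proof (dirichlet_decay m y Hm Hy).
  pose proof (dirichlet_nonneg m y).
  assert (0 <= (2 * INR m + 1)^2 * y^2) by (apply Rmult_le_pos; apply pow2_ge_0).
  nra.
Qed.

Lemma prodR_one_plus_sq_ge n x k M : 0 <= k -> (forall i, (i < n)%nat -> Rabs (x i) <= M) ->
  k^2 * (l2sq n x ^ 2 - M^2 * l2sq n x) / 2 <= prodR n (fun i => 1 + k * x i ^ 2).
Proof.
  intros Hk HM; unfold l2sq; set (W := sumR n (fun i => x i ^ 2)).
  assert (HW : 0 <= W) by (apply sumR_nonneg; intros; apply pow2_ge_0).
  assert (Hsum : sumR n (fun i => k * x i ^ 2) = k * W) by apply sumR_scal.
  assert (Hsq : sumR n (fun i => (k * x i ^ 2)^2) <= k^2 * (M^2 * W)).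
  { unfold W; rewrite <- !sumR_scal; apply sumR_le; intros i Hi.
    pose proof (HM i Hi); pose proof (Rabs_pos (x i)).
    assert (x i ^ 2 <= M^2) by (rewrite <- pow2_abs; nra).
    replace ((k * x i ^ 2)^2) with (k^2 * (x i ^ 2 * x i ^ 2)) by ring.
    apply Rmult_le_compat_l; [nra | apply Rmult_le_compat_r; [apply pow2_ge_0 | assumption]]. }
  pose proof (prodR_one_plus_ge n (fun i => k * x i ^ 2)
                ltac:(intros; apply Rmult_le_pos; [lra | apply pow2_ge_0])) as Hexp.
  rewrite Hsum in Hexp.
  assert (0 <= k * W) by nra.
  nra.
Qed.

Lemma kernel_arg_half m n delta x t i : (1 <= m)%nat -> 0 < delta -> linf n x <= delta ->
  0 <= t <= PI * INR m / delta -> (i < n)%nat -> Rabs (x i * t / (2 * PI * INR m)) <= 1/2.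
Proof.
  intros Hm Hd HM [Ht0 Ht1] Hi.
  pose proof (le_INR 1 m Hm); simpl INR in *; pose proof PI_RGT_0.
  pose proof (linf_ge n x i Hi).
  unfold Rdiv; rewrite !Rabs_mult, Rabs_inv, (Rabs_pos_eq t), (Rabs_pos_eq (2 * PI * INR m)) by nra.
  assert (t * delta <= PI * INR m).
  { apply (Rmult_le_compat_r delta) in Ht1; [| lra].
    replace (PI * INR m / delta * delta) with (PI * INR m) in Ht1 by (field; lra); lra. }
  assert (Rabs (x i) * t <= PI * INR m)
    by (apply (Rle_trans _ (delta * t)); [apply Rmult_le_compat_r |]; lra).
  apply (Rmult_le_reg_r (2 * PI * INR m)); [nra |].
  rewrite Rmult_assoc, (Rmult_assoc (Rabs (x i))), Rinv_l by nra; lra.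
Qed.

Lemma le_of_sq_mul_le g B Q : 0 <= g -> 0 <= B -> 0 < Q -> g^2 * Q <= 1 -> 1 <= B^2 * Q -> g <= B.
Proof.
  intros Hg HB HQ Hg2 HB2.
  destruct (Rle_or_lt g B) as [Hle | Hlt]; [exact Hle |].
  assert (B^2 * Q < g^2 * Q) by (apply Rmult_lt_compat_r; nra).
  lra.
Qed.

(* Pointwise decay of the integrand: for 0 < t <= pi m / delta,
   prod_i F(x_i t / (2 pi m)) <= 2 pi^2 / (gamma t)^2.  Multiplying the
   factorwise estimates F(y_i)^2 (1 + N^2 y_i^2) <= 1 gives
   (prod F)^2 prod (1 + k x_i^2) <= 1 with k = (N t / (2 pi m))^2 >= (t/pi)^2,
   and the product is >= k^2 (W^2 - M^2 W)/2 >= k^2 gamma^4 / 2. *)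
Lemma kernel_product_decay m n gamma delta x t :
  (1 <= m)%nat -> 0 < gamma -> 0 < delta -> linf n x <= delta ->
  l2sq n x >= linf n x ^ 2 + gamma ^ 2 -> 0 < t <= PI * INR m / delta ->
  prodR n (fun i => dirichlet m (x i * t / (2 * PI * INR m))) <= 2 * PI^2 / (gamma^2 * t^2).
Proof.
  intros Hm Hg Hd HM HW [Ht0 Ht1].
  pose proof (le_INR 1 m Hm); simpl INR in *; pose proof PI_RGT_0.
  set (N := 2 * INR m + 1); set (y := fun i => x i * t / (2 * PI * INR m)).
  set (k := N^2 * t^2 / (4 * PI^2 * INR m^2)).
  set (M := linf n x) in *; set (W := l2sq n x) in *.
  pose proof (linf_nonneg n x) as HM0; fold M in HM0.
  assert (Hk0 : 0 <= k) by (unfold k; apply div_nonneg; nra).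
  assert (Hfactor : forall i, (i < n)%nat ->
    0 <= k * x i ^ 2 /\ 0 <= dirichlet m (y i) ^ 2 /\
    dirichlet m (y i) ^ 2 * (1 + k * x i ^ 2) <= 1).
  { intros i Hi; repeat split; [apply Rmult_le_pos; [lra | apply pow2_ge_0] | apply pow2_ge_0 |].
    replace (k * x i ^ 2) with ((2 * INR m + 1)^2 * y i ^ 2) by (unfold k, y, N; field; nra).
    apply dirichlet_decay; [assumption |].
    apply (kernel_arg_half m n delta); auto; lra. }
  pose proof (prodR_mul_le_1 n _ _ Hfactor) as Hprod; rewrite <- prodR_sq in Hprod.
  set (P := prodR n (fun i => 1 + k * x i ^ 2)) in *.
  set (g := prodR n (fun i => dirichlet m (y i))) in *.
  assert (Hk : t^2 / PI^2 <= k).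
  { unfold k; replace (t^2 / PI^2) with (4 * INR m^2 * t^2 / (4 * PI^2 * INR m^2)) by (field; nra).
    unfold Rdiv; apply Rmult_le_compat_r; [apply Rlt_le, Rinv_0_lt_compat; nra |].
    apply Rmult_le_compat_r; [nra | unfold N; nra]. }
  assert (HP : k^2 * gamma^4 / 2 <= P).
  { pose proof (prodR_one_plus_sq_ge n x k M Hk0 (fun i Hi => linf_ge n x i Hi)) as Hlow.
    fold W P in Hlow.
    assert (gamma^4 <= W * (W - M^2)) by (replace (gamma^4) with (gamma^2 * gamma^2) by ring;
                                           apply Rmult_le_compat; nra).
    assert (k^2 * gamma^4 <= k^2 * (W * (W - M^2))) by (apply Rmult_le_compat_l; nra).
    nra. }
  set (Q := t^4 / PI^4 * gamma^4 / 2).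
  assert (HQ : 0 < Q)
    by (unfold Q; apply Rdiv_lt_0_compat; [apply Rmult_lt_0_compat;
          [apply Rdiv_lt_0_compat |]; apply pow_lt |]; lra).
  assert (HQP : Q <= P).
  { apply (Rle_trans _ (k^2 * gamma^4 / 2)); [| assumption].
    assert (0 <= t^2 / PI^2) by (apply div_nonneg; nra).
    assert (t^4 / PI^4 <= k^2)
      by (replace (t^4 / PI^4) with ((t^2 / PI^2)^2) by (field; lra); nra).
    assert (0 < gamma^4) by (apply pow_lt; lra).
    unfold Q; nra. }
  apply le_of_sq_mul_le with Q.
  - apply prodR_nonneg; intros; apply dirichlet_nonneg.
  - apply div_nonneg; [nra | apply Rmult_lt_0_compat; apply pow_lt; lra].
  - exact HQ.
  - apply (Rle_trans _ (g^2 * P)); [apply Rmult_le_compat_l; [apply pow2_ge_0 | lra] | exact Hprod].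
  - unfold Q; replace ((2 * PI^2 / (gamma^2 * t^2))^2 * (t^4 / PI^4 * gamma^4 / 2)) with 2
      by (field; split; lra); lra.
Qed.

Lemma RInt_plateau_tail_bound (G : R -> R) (T A a : R) :
  continuity G -> 0 <= T -> 0 < a -> 0 <= A ->
  (forall t, 0 <= t <= T -> G t <= 1) ->
  (forall t, 0 < t <= T -> G t <= A / t^2) ->
  RInt G 0 T <= a + A / a.
Proof.
  intros Hcont HT Ha HA Hone Htail.
  assert (Hex : forall u v, ex_RInt G u v).
  { intros u v; apply (@ex_RInt_continuous R_CompleteNormedModule).
    intros z _; apply continuity_pt_filterlim, Hcont. }
  assert (Hplateau : forall b, 0 <= b <= T -> RInt G 0 b <= b).
  { intros b Hb; apply (Rle_trans _ (RInt (fun _ => 1) 0 b)).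
    - apply RInt_le; auto; [lra | apply ex_RInt_const |].
      intros t Ht; apply Hone; lra.
    - rewrite RInt_const; right; unfold scal; simpl; unfold mult; simpl; ring. }
  assert (0 <= A / a) by (apply div_nonneg; lra).
  destruct (Rle_or_lt T a) as [HTa | HTa].
  - pose proof (Hplateau T ltac:(lra)); lra.
  - rewrite <- (RInt_Chasles G 0 a T) by auto.
    pose proof (Hplateau a ltac:(lra)).
    (* t |-> -A/t is an antiderivative of A/t^2 on [a, T] *)
    assert (Hprim : is_RInt (fun t => A / t^2) a T (minus (- A / T) (- A / a))).
    { apply (@is_RInt_derive R_CompleteNormedModule (fun t => - A / t)).
      - intros t Ht; rewrite Rmin_left, Rmax_right in Ht by lra.
        auto_derive; [lra | field; lra].
      - intros t Ht; rewrite Rmin_left, Rmax_right in Ht by lra.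
        apply (@ex_derive_continuous R_AbsRing R_NormedModule).
        auto_derive; apply Rgt_not_eq; nra. }
    assert (Htail_int : RInt G a T <= RInt (fun t => A / t^2) a T).
    { apply RInt_le; auto; [lra | eexists; exact Hprim |].
      intros t Ht; apply Htail; lra. }
    rewrite (is_RInt_unique _ _ _ _ Hprim) in Htail_int.
    assert (0 <= A / T) by (apply div_nonneg; lra).
    replace (minus (- A / T) (- A / a)) with (A / a - A / T) in Htail_int
      by (unfold minus, plus, opp; simpl; field; lra).
    unfold plus; simpl; lra.
Qed.

Lemma kernel_product_continuous m n x : (1 <= m)%nat ->
  continuity (fun t => prodR n (fun i => dirichlet m (x i * t / (2 * PI * INR m)))).
Proof.
  intros Hm; pose proof (le_INR 1 m Hm); simpl INR in *; pose proof PI_RGT_0.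
  apply prodR_continuous; intros k _ t.
  apply (continuity_pt_ext (comp (dirichlet m) (fun t => x k / (2 * PI * INR m) * t)));
    [intros u; unfold comp; f_equal; field; nra |].
  apply continuity_comp; [apply linear_continuous | apply dirichlet_continuous].
Qed.

(* Main theorem, with c = 3 pi: the integrand is at most 1 on [0, T] and at most
   2 pi^2/(gamma t)^2 there, so splitting at a = 2 pi / gamma bounds the
   integral by 2 pi/gamma + pi/gamma. *)
Theorem lemma5p8 :
  exists c : R, 0 < c /\
  forall (m n : nat) (gamma delta : R) (x : nat -> R),
    (1 <= m)%nat -> (1 <= n)%nat -> 0 < gamma -> 0 < delta ->
    linf n x <= delta ->
    l2sq n x >= linf n x ^ 2 + gamma ^ 2 ->
    RInt (fun t => prodR n (fun i => Fker m (x i * t / (2 * PI * INR m))))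
         0 (PI * INR m / delta)
    <= c / gamma.
Proof.
  pose proof PI_RGT_0.
  exists (3 * PI); split; [lra |].
  intros m n gamma delta x Hm _ Hg Hd HM HW.
  pose proof (le_INR 1 m Hm); simpl INR in *.
  replace (Fker m) with (dirichlet m)
    by (apply functional_extensionality; intros y; symmetry; apply Fker_dirichlet).
  replace (3 * PI / gamma) with (2 * PI / gamma + 2 * PI^2 / gamma^2 / (2 * PI / gamma))
    by (field; lra).
  apply RInt_plateau_tail_bound.
  - apply kernel_product_continuous, Hm.
  - apply div_nonneg; nra.
  - apply Rdiv_lt_0_compat; lra.
  - apply div_nonneg; [nra | apply pow_lt; lra].
  - intros t Ht; apply prodR_le_1; intros i Hi; split; [apply dirichlet_nonneg |].
    apply dirichlet_le_1; [exact Hm |]; apply (kernel_arg_half m n delta); auto.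
  - intros t Ht; replace (2 * PI^2 / gamma^2 / t^2) with (2 * PI^2 / (gamma^2 * t^2))
      by (field; lra).
    apply (kernel_product_decay m n gamma delta x t); auto.
Qed.
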